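(* Let $A,B\subseteq\mathbb{R}^n$ be finite nonempty sets (Euclidean metric), $\beta>0$ and $\delta>d^N_P(A,B)$. For all $r>0$ and $s>\delta$, $$\overline{\mathrm{Cr}}^\beta_{r,s}(A)\subseteq\overline{\mathrm{Cr}}^\beta_{r',s-\delta}(B),\qquad \overline{\mathrm{Cr}}^\beta_{r,s}(B)\subseteq\overline{\mathrm{Cr}}^\beta_{r',s-\delta}(A),$$ $$\overline{\mathrm{DCr}}^\beta_{r,s}(A)\subseteq\overline{\mathrm{DCr}}^\beta_{r'',s-\delta}(B),\qquad \overline{\mathrm{DCr}}^\beta_{r,s}(B)\subseteq\overline{\mathrm{DCr}}^\beta_{r'',s-\delta}(A),$$ where $r'=\max\{2(r+\beta\delta),(1+\beta^{-1})r+\delta\}$ and $r''=\max\{1,2\beta\}\big((1+\beta^{-1})r+\delta\big)$.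
   Context: $d$ Euclidean, $\bar B_d(x,r)=\{y:d(x,y)\le r\}$. For finite $A$, $k>0$, $x\in\mathbb{R}^n$, $\mathrm{core}^A_k(x)$ is the distance from $x$ to its $\lceil k\rceil$-th nearest neighbor in $A$ (each point of $A$ counted once, $x$ itself counting if $x\in A$); equivalently $\min\{r\ge0:|\bar B_d(x,r)\cap A|\ge k\}$, and $\infty$ if $k>|A|$. For $\beta>0$: $\Lambda^\beta_k(a,x)=\max\{\beta\,\mathrm{core}^A_k(a),d(a,x)\}$, $B^\beta_{r,k}(a)=\{x:\Lambda^\beta_k(a,x)\le r\}$, $\mathrm{Cr}^\beta_{r,k}(A)=\bigcup_{a\in A}B^\beta_{r,k}(a)$, $\mathrm{Vor}_A(a)=\{x:d(a,x)\le d(a',x)\ \forall a'\in A\}$, $\mathrm{DCr}^\beta_{r,k}(A)=\bigcup_{a\in A}\big(B^\beta_{r,k}(a)\cap\mathrm{Vor}_A(a)\big)$. Normalized versions: $\overline{\mathrm{Cr}}^\beta_{r,s}(A)=\mathrm{Cr}^\beta_{r,s|A|}(A)$ and $\overline{\mathrm{DCr}}^\beta_{r,s}(A)=\mathrm{DCr}^\beta_{r,s|A|}(A)$ for $r,s>0$ (similarly for $B$). For $S\subseteq\mathbb{R}^n$, $\delta\ge0$: $S^\delta=\bigcup_{x\in S}\bar B_d(x,\delta)$. Normalized Prohorov distance: $d^N_P(A,B)=\sup_{S\text{ closed}}\inf\{\delta\ge0:\tfrac{|S\cap A|}{|A|}\le\tfrac{|S^\delta\cap B|}{|B|}+\delta\text{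 and }\tfrac{|S\cap B|}{|B|}\le\tfrac{|S^\delta\cap A|}{|A|}+\delta\}$. *)

From HB Require Import structures.
From mathcomp Require Import all_boot all_order all_algebra.
From mathcomp Require Import finmap.
From mathcomp Require Import all_classical all_reals all_analysis.
Set Implicit Arguments. Unset Strict Implicit. Unset Printing Implicit Defensive.
Import Order.TTheory GRing.Theory Num.Theory.
Import numFieldNormedType.Exports.
Local Open Scope classical_set_scope.
Local Open Scope ring_scope.

Section Defs.
Variables (R : realType) (n : nat).
Notation pt := 'rV[R]_n.

Definition edist (x y : pt) : R := Num.sqrt (\sum_(i < n) (x ord0 i - y ord0 i) ^+ 2).

Definition cnt (S : set pt) (A : {fset pt}) : nat :=
  #|` [fset a in A | `[< S a >]]%fset |.

Definition cball (x : pt) (r : R) : set pt := [set y | edist x y <= r].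

(* core^A_k(x) = min{ r >= 0 : |B(x,r) ∩ A| >= k }, +oo if no such r *)
Definition core (A : {fset pt}) (k : R) (x : pt) : \bar R :=
  ereal_inf [set r%:E | r in [set r : R | 0 <= r /\ k <= (cnt (cball x r) A)%:R]].

Definition Lambda (A : {fset pt}) (beta k : R) (a x : pt) : \bar R :=
  maxe (beta%:E * core A k a)%E (edist a x)%:E.

Definition Bbeta (A : {fset pt}) (beta r k : R) (a : pt) : set pt :=
  [set x | (Lambda A beta k a x <= r%:E)%E].

Definition Cr (A : {fset pt}) (beta r k : R) : set pt :=
  \bigcup_(a in [set a | a \in A]) Bbeta A beta r k a.

Definition Vor (A : {fset pt}) (a : pt) : set pt :=
  [set x | forall a', a' \in A -> edist a x <= edist a' x].

Definition DCr (A : {fset pt}) (beta r k : R) : set pt :=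
  \bigcup_(a in [set a | a \in A]) (Bbeta A beta r k a `&` Vor A a).

Definition nCr (A : {fset pt}) (beta r s : R) : set pt :=
  Cr A beta r (s * (#|` A |)%:R).
Definition nDCr (A : {fset pt}) (beta r s : R) : set pt :=
  DCr A beta r (s * (#|` A |)%:R).

Definition thick (S : set pt) (d : R) : set pt :=
  \bigcup_(x in S) cball x d.

Definition frac (S : set pt) (A : {fset pt}) : R :=
  (cnt S A)%:R / (#|` A |)%:R.

Definition prohorovN (A B : {fset pt}) : \bar R :=
  ereal_sup [set ereal_inf [set d%:E | d in [set d : R | 0 <= d /\
      frac S A <= frac (thick S d) B + d /\
      frac S B <= frac (thick S d) A + d]] | S in [set S : set pt | closed S]].

End Defs.

(** Let [x] lie in the ball [B^beta_{r,sN_A}(a)] of a center [a] of [A], so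
    that [c = core^A_{sN_A}(a) <= r / beta].  A ball [B(a, rho)] with [rho]
    slightly above [c] holds a fraction [s] of [A]; the Prohorov bound applied
    to the (closed, finite) set of these points shows that the thickened ball
    [B(a, rho + d)], [d < delta], holds a fraction [s - delta] of [B].  A point
    [b] of [B] in that ball is a new center: the ball of twice the radius
    around [b] contains the same points, so [core^B_{(s-delta)N_B}(b)] is at
    most [2 (c + delta)], while [d(b, x)] is bounded by the triangle
    inequality.  For the Delaunay version [b] is taken nearest to [x] in [B]
    instead, which costs one more use of the triangle inequality. *)
From Pilot Require Import Defs.
From mathcomp Require Import all_boot all_order all_algebra.
From mathcomp Require Import finmap.
From mathcomp Require Import all_classical all_reals all_analysis.
From mathcomp Require Import ring lra.
Import Order.TTheory GRing.Theory Num.Theory.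
Import numFieldNormedType.Exports.
Set Implicit Arguments. Unset Strict Implicit.
Local Open Scope classical_set_scope.
Local Open Scope ring_scope.

Lemma sumr_CauchySchwarz (R : realFieldType) (I : finType) (u v : I -> R) :
  (\sum_i u i * v i) ^+ 2 <= (\sum_i u i ^+ 2) * (\sum_i v i ^+ 2).
Proof.
have lagrange : (\sum_i u i ^+ 2) * (\sum_i v i ^+ 2) *+ 2
                - (\sum_i u i * v i) ^+ 2 *+ 2
    = \sum_i \sum_j (u i * v j - u j * v i) ^+ 2.
  rewrite mulr2n [X in X + _ - _]big_distrlr mulrC big_distrlr expr2 big_distrlr /=.
  rewrite -big_split /= -sumrMnl -sumrB; apply: eq_bigr => i _.
  rewrite -big_split /= -sumrMnl -sumrB; apply: eq_bigr => j _; ring.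
have : 0 <= \sum_i \sum_j (u i * v j - u j * v i) ^+ 2.
  by apply: sumr_ge0 => i _; apply: sumr_ge0 => j _; exact: sqr_ge0.
by rewrite -lagrange -mulrnBl pmulrn_lge0 // subr_ge0.
Qed.

Lemma sqrt_sum_sqrD (R : rcfType) (I : finType) (u v : I -> R) :
  Num.sqrt (\sum_i (u i + v i) ^+ 2)
    <= Num.sqrt (\sum_i u i ^+ 2) + Num.sqrt (\sum_i v i ^+ 2).
Proof.
set a := \sum_i u i ^+ 2; set c := \sum_i v i ^+ 2.
have a0 : 0 <= a by apply: sumr_ge0 => i _; exact: sqr_ge0.
have c0 : 0 <= c by apply: sumr_ge0 => i _; exact: sqr_ge0.
have uv_le : \sum_i u i * v i <= Num.sqrt a * Num.sqrt c.
  rewrite -sqrtrM //; apply: le_trans (ler_norm _) _.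
  by rewrite -sqrtr_sqr ler_wsqrtr // sumr_CauchySchwarz.
have -> : \sum_i (u i + v i) ^+ 2 = a + 2 * \sum_i u i * v i + c.
  by rewrite /a /c mulr_sumr -!big_split /=; apply: eq_bigr => i _; ring.
rewrite -[X in _ <= X]ger0_norm ?addr_ge0 ?sqrtr_ge0 // -sqrtr_sqr ler_wsqrtr //.
by rewrite sqrrD !sqr_sqrtr // -mulr_natr; lra.
Qed.

Lemma fset_argmin (T : choiceType) (d : Order.disp_t) (O : orderType d)
    (f : T -> O) (B : {fset T}) :
  B != fset0 -> exists2 b, b \in B & forall b', b' \in B -> (f b <= f b')%O.
Proof.
case/fset0Pn => b0 b0B.
have [b _ bmin] := @arg_minP _ _ B [`b0B]%fset xpredT (fun b => f (val b)) isT.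
by exists (val b) => [|b' b'B]; [exact: valP | exact: (bmin [`b'B]%fset)].
Qed.

Section Crusts.
Variables (R : realType) (n : nat).
Local Notation pt := 'rV[R]_n.
Local Notation edist := (@Defs.edist R n).
Local Notation frac := (@Defs.frac R n).

Lemma edist_ge0 (x y : pt) : 0 <= edist x y.
Proof. exact: sqrtr_ge0. Qed.

Lemma edistC (x y : pt) : edist x y = edist y x.
Proof.
by rewrite /Defs.edist; congr Num.sqrt; apply: eq_bigr => i _; rewrite -sqrrN opprB.
Qed.

Lemma edist_triangle (x y z : pt) : edist x z <= edist x y + edist y z.
Proof.
rewrite /Defs.edist (eq_bigr (fun i => ((x ord0 i - y ord0 i) + (y ord0 i - z ord0 i)) ^+ 2)).
  exact: sqrt_sum_sqrD.
by move=> i _; rewrite addrA subrK.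
Qed.

Lemma leq_cnt (P Q : set pt) (A : {fset pt}) :
  (forall y, y \in A -> P y -> Q y) -> (cnt P A <= cnt Q A)%N.
Proof.
move=> PQ; apply: fsubset_leq_card; apply/fsubsetP => y.
by rewrite !inE => /andP[yA /asboolP Py]; rewrite yA; apply/asboolP/PQ.
Qed.

Lemma cnt_gt0 (P : set pt) (A : {fset pt}) :
  (0 < cnt P A)%N -> exists2 y, y \in A & P y.
Proof.
rewrite /cnt cardfs_gt0 => /fset0Pn[y].
by rewrite !inE => /andP[yA /asboolP Py]; exists y.
Qed.

Lemma closed_fset (F : {fset pt}) : closed [set x : pt | x \in F].
Proof.
apply: (proj1 accessible_finite_set_closed) (finite_fset F).
exact/hausdorff_accessible/norm_hausdorff.
Qed.

Lemma core_ge0 (A : {fset pt}) (k : R) (x : pt) : (0 <= core A k x)%E.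
Proof. by apply: le_ereal_inf_tmp => _ [u [u0 _] <-]; rewrite lee_fin. Qed.

Lemma core_le (A : {fset pt}) (k u : R) (x : pt) :
  0 <= u -> k <= (cnt (cball x u) A)%:R -> (core A k x <= u%:E)%E.
Proof. by move=> u0 hk; apply: ge_ereal_inf; exists u%:E => //; exists u. Qed.

Lemma core_approx (A : {fset pt}) (k c e : R) (x : pt) :
  core A k x = c%:E -> 0 < e ->
  exists rho, [/\ 0 <= rho, k <= (cnt (cball x rho) A)%:R & rho < c + e].
Proof.
move=> xc e0; have : core A k x \is a fin_num by rewrite xc.
move=> /(lb_ereal_inf_adherent e0) [_ [rho [rho0 hk] <-]].
by rewrite -/(core A k x) xc -EFinD lte_fin => ?; exists rho.
Qed.

Lemma core_fin_le (A : {fset pt}) (beta k r : R) (x : pt) : 0 < beta ->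
  (beta%:E * core A k x <= r%:E)%E -> exists2 c, core A k x = c%:E & beta * c <= r.
Proof.
move=> beta0; have := core_ge0 A k x.
case: (core A k x) => [c _ | _ | //]; first by rewrite -EFinM lee_fin; exists c.
by rewrite mulry gtr0_sg // mul1e.
Qed.

Lemma Lambda_le (A : {fset pt}) (beta k r : R) (a x : pt) :
  (Lambda A beta k a x <= r%:E)%E
  = (beta%:E * core A k a <= r%:E)%E && (edist a x <= r).
Proof. by rewrite /Lambda ge_max lee_fin. Qed.

Definition prohorov_dominated (A B : {fset pt}) (dl : R) :=
  forall S : set pt, closed S ->
    exists d, [/\ 0 <= d, d < dl & frac S A <= frac (thick S d) B + d].

Lemma prohorovN_lt_dominated (A B : {fset pt}) (dl : R) :
  (prohorovN A B < dl%:E)%E ->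
  prohorov_dominated A B dl /\ prohorov_dominated B A dl.
Proof.
move=> AB_lt; suff S_lt : forall S : set pt, closed S -> exists d,
    [/\ 0 <= d, d < dl, frac S A <= frac (thick S d) B + d
                      & frac S B <= frac (thick S d) A + d].
  by split=> S /S_lt[d [? ? ? ?]]; exists d.
move=> S cS; have := le_lt_trans (ereal_sup_ubound (ex_intro2 _ _ S cS erefl)) AB_lt.
by move=> /ereal_inf_lt[_ [d [d0 [h1 h2]] <-]]; rewrite lte_fin; exists d.
Qed.

Section Transfer.
Variables (A B : {fset pt}) (dl delta beta : R).
Hypotheses (A_neq0 : A != fset0) (B_neq0 : B != fset0) (beta_gt0 : 0 < beta).
Hypotheses (dl_lt : dl < delta) (AB_dom : prohorov_dominated A B dl).

Local Notation NA := (#|` A |)%:R.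
Local Notation NB := (#|` B |)%:R.

Lemma core_mass_transfer (s c : R) (a : pt) :
  core A (s * NA) a = c%:E -> exists t,
    [/\ 0 <= t, t < c + delta & (s - delta) * NB <= (cnt (cball a t) B)%:R].
Proof.
move=> ac; have gap : 0 < delta - dl by rewrite subr_gt0.
have [rho [rho0 A_mass rho_lt]] := core_approx ac gap.
pose F := [fset y in A | `[< cball a rho y >]]%fset.
have [d [d0 d_lt F_dom]] := AB_dom (@closed_fset F).
have NA_gt0 : 0 < NA :> R by rewrite ltr0n cardfs_gt0.
have NB_gt0 : 0 < NB :> R by rewrite ltr0n cardfs_gt0.
have F_frac : s <= frac [set x | x \in F] A.
  rewrite /Defs.frac ler_pdivlMr //; apply: le_trans A_mass _; rewrite ler_nat.
  by apply: leq_cnt => y yA ay; rewrite /mkset /F !inE yA; apply/asboolP.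
have thick_sub : (cnt (thick [set x | x \in F] d) B <= cnt (cball a (rho + d)) B)%N.
  apply: leq_cnt => y _ [z]; rewrite /mkset /F !inE => /andP[_ /asboolP az] zy.
  exact: le_trans (edist_triangle a z y) (lerD az zy).
exists (rho + d); split; [exact: addr_ge0 | lra |].
apply: (@le_trans _ _ (cnt (thick [set x | x \in F] d) B)%:R); last by rewrite ler_nat.
rewrite -[leRHS](divfK (lt0r_neq0 NB_gt0)) ler_wpM2r ?ltW // -/(frac _ B); lra.
Qed.

Lemma Bbeta_transfer (r s : R) (a x : pt) : delta < s ->
  (Lambda A beta (s * NA) a x <= r%:E)%E -> exists t b, [/\ b \in B,
    edist a b <= t, t <= beta^-1 * r + delta, edist a x <= r
    & (s - delta) * NB <= (cnt (cball a t) B)%:R].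
Proof.
move=> s_gt; rewrite Lambda_le => /andP[/core_fin_le-/(_ beta_gt0)[c ac c_le] ax].
have [t [t0 t_lt B_mass]] := core_mass_transfer ac.
have [b bB ab] : exists2 b, b \in B & cball a t b.
  apply: cnt_gt0; rewrite -(ltr0n R); apply: lt_le_trans B_mass.
  by rewrite mulr_gt0 ?subr_gt0 // ltr0n cardfs_gt0.
exists t, b; split=> //; apply: le_trans (ltW t_lt) _.
by rewrite lerD2r mulrC ler_pdivlMr // mulrC.
Qed.

Lemma nCr_transfer (r s : R) : delta < s ->
  nCr A beta r s `<=`
  nCr B beta (Num.max (2 * (r + beta * delta)) ((1 + beta^-1) * r + delta)) (s - delta).
Proof.
move=> s_gt x [a aA]; rewrite /Bbeta /= => /(Bbeta_transfer s_gt).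
move=> [t [b [bB ab t_le ax B_mass]]].
exists b => //; rewrite /Bbeta /= Lambda_le; apply/andP; split.
- apply: (@le_trans _ _ (beta%:E * (2 * t)%:E)%E).
    apply: lee_wpmul2l; first by rewrite lee_fin ltW.
    apply: core_le; first by rewrite mulr_ge0 // (le_trans (edist_ge0 a b)).
    apply: le_trans B_mass _; rewrite ler_nat; apply: leq_cnt => y _ ay.
    rewrite /cball /= in ay *; rewrite edistC in ab.
    by have := edist_triangle b a y; lra.
  rewrite -EFinM lee_fin le_max; apply/orP; left.
  have := ler_wpM2l (ltW beta_gt0) t_le.
  by rewrite mulrDr mulVKf ?gt_eqF //; lra.
- rewrite le_max; apply/orP; right.
  rewrite edistC in ab; have := edist_triangle b a x.
  by rewrite mulrDl mul1r; lra.
Qed.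

Lemma nDCr_transfer (r s : R) : delta < s ->
  nDCr A beta r s `<=`
  nDCr B beta (Num.max 1 (2 * beta) * ((1 + beta^-1) * r + delta)) (s - delta).
Proof.
move=> s_gt x [a aA [+ _]]; rewrite /Bbeta /= => /(Bbeta_transfer s_gt).
move=> [t [b1 [b1B ab1 t_le ax B_mass]]].
have [b bB b_near] := fset_argmin (fun b => edist b x) B_neq0.
set m := Num.max 1 (2 * beta); set M := (1 + beta^-1) * r + delta.
have m1 : 1 <= m by rewrite le_max lexx.
have m2 : 2 * beta <= m by rewrite le_max lexx orbT.
have t0 := le_trans (edist_ge0 a b1) ab1.
have r0 := le_trans (edist_ge0 a x) ax.
have tr_le : t + r <= M by rewrite /M mulrDl mul1r; lra.
have M0 : 0 <= M by lra.
have M_le : M <= m * M by rewrite ler_peMl.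
have bx : edist b x <= t + r.
  apply: le_trans (b_near _ b1B) _; rewrite edistC in ab1.
  by have := edist_triangle b1 a x; lra.
exists b => //; split; last by move=> b' /b_near.
rewrite /Bbeta /= Lambda_le; apply/andP; split; last by lra.
apply: (@le_trans _ _ (beta%:E * (2 * (t + r))%:E)%E).
  apply: lee_wpmul2l; first by rewrite lee_fin ltW.
  apply: core_le; first by rewrite mulr_ge0 // (le_trans (edist_ge0 b x)).
  apply: le_trans B_mass _; rewrite ler_nat; apply: leq_cnt => y _ ay.
  have := edist_triangle b a y; have := edist_triangle b x a.
  by rewrite /cball /= (edistC x a) in ay *; lra.
rewrite -EFinM lee_fin; apply: le_trans (ler_wpM2r M0 m2).
by have := ler_wpM2l (ltW beta_gt0) tr_le; lra.
Qed.

End Transfer.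
End Crusts.

Theorem mainTheorem9 (R : realType) (n : nat) (A B : {fset 'rV[R]_n})
  (hA : A != fset0) (hB : B != fset0) (beta delta : R) (hbeta : 0 < beta)
  (hdelta : (prohorovN A B < delta%:E)%E) :
  forall r s : R, 0 < r -> delta < s ->
  let r' := Num.max (2 * (r + beta * delta)) ((1 + beta^-1) * r + delta) in
  let r'' := Num.max 1 (2 * beta) * ((1 + beta^-1) * r + delta) in
  [/\ nCr A beta r s `<=` nCr B beta r' (s - delta),
      nCr B beta r s `<=` nCr A beta r' (s - delta),
      nDCr A beta r s `<=` nDCr B beta r'' (s - delta)
    & nDCr B beta r s `<=` nDCr A beta r'' (s - delta)].
Proof.
move=> r s _ s_gt r' r''.
(* The strict gap [dl < delta] leaves room to approximate cores from above. *)
have [dl AB_lt dl_lt] : exists2 dl : R, (prohorovN A B < dl%:E)%E & dl < delta.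
  move: hdelta; case: (prohorovN A B) => [p | // | _].
    by rewrite lte_fin => p_lt; exists ((p + delta) / 2); rewrite ?lte_fin; lra.
  by exists (delta - 1); [rewrite ltNye | lra].
have [AB_dom BA_dom] := prohorovN_lt_dominated AB_lt.
split.
- exact: (nCr_transfer hA hB hbeta dl_lt AB_dom (r := r) s_gt).
- exact: (nCr_transfer hB hA hbeta dl_lt BA_dom (r := r) s_gt).
- exact: (nDCr_transfer hA hB hbeta dl_lt AB_dom (r := r) s_gt).
- exact: (nDCr_transfer hB hA hbeta dl_lt BA_dom (r := r) s_gt).
Qed.
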